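(* Let $X$ be a Fréchet space and let $\Gamma:[0,1]\to cb(X)$ be a multifunction. Then the following are equivalent: (i) $\Gamma$ is Bochner measurable; (ii) $\Gamma$ is totally measurable; (iii) $\Gamma$ is measurable by seminorm.
   Context: $X$ is a Fréchet space (metrizable, complete, locally convex) whose topology is generated by an increasing sufficient sequence of seminorms $(p_i)_{i\in\mathbb N}$, with the translation-invariant metric $d(x,y)=\sum_{i\ge1}2^{-i}\frac{p_i(x-y)}{1+p_i(x-y)}$. $cb(X)$ denotes the family of nonempty closed bounded convex subsets of $X$. For $A,B\in cb(X)$: $H(A,B)=\max(e_d(A,B),e_d(B,A))$ with $e_d(A,B)=\sup_{a\in A}\inf_{b\in B}d(a,b)$ (Hausdorff metric), and for each $i$, $H_i(A,B)=\max(e_i(A,B),e_i(B,A))$ with $e_i(A,B)=\sup_{a\in A}\inf_{b\in B}p_i(a-b)$. $[0,1]$ carries Lebesgue measure $\mu$ and the $\sigma$-algebra $\mathcal L$ of Lebesgue measurable sets. A simple multifunction is $\Gamma=\sum_{j=1}^p\chi_{A_j}C_j$ with $A_j\in\mathcal L$ pairwise disjoint and $C_j\in cb(X)$. $\Gamma$ is Bochner measurable if there are simple multifunctions $\Gamma_n:[0,1]\to cb(X)$ with $H(\Gamma_n(t),\Gamma(t))\to0$ for a.e. $t$; totally measurable if there are simple multifunctions $\Gamma_n:[0,1]\to cb(X)$ such that for every $i$, $H_i(\Gamma_n(t),\Gamma(t))\to0$ for a.e. $t$; measurable by seminorm if for every $i$ there are simple multifunctions $\Gamma_n^i:[0,1]\to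 cb(X)$ with $H_i(\Gamma^i_n(t),\Gamma(t))\to0$ for a.e. $t$. *)

From HB Require Import structures.
From mathcomp Require Import all_boot all_order all_algebra.
From mathcomp Require Import all_classical all_reals all_analysis.
Set Implicit Arguments. Unset Strict Implicit. Unset Printing Implicit Defensive.
Import Order.TTheory GRing.Theory Num.Theory.
Local Open Scope classical_set_scope.
Local Open Scope ring_scope.

Definition Lmu (R : realType) := @completed_lebesgue_measure R.

Definition Lmeasurable (R : realType) (A : set R) : Prop :=
  (@wlength R idfun)^*%mu.-cara.-measurable A.

(* ---------- Fréchet spaces given by an increasing sufficient sequence of
   seminorms (p i)_i (index i : nat stands for the paper's i+1) ---------- *)

Section Frechet.
Variables (R : realType) (X : lmodType R) (p : nat -> X -> R).

Definition fdist (x y : X) : \bar R :=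
  (\sum_(i <oo) ((2 ^- i.+1 * (p i (x - y) / (1 + p i (x - y))))%:E))%E.

Definition is_seminorm (q : X -> R) : Prop :=
  (forall x y, q (x + y) <= q x + q y) /\ (forall (a : R) x, q (a *: x) = `|a| * q x).

Definition frechet_seminorms : Prop :=
  [/\ (forall i, is_seminorm (p i)),
      (forall i x, p i x <= p i.+1 x),
      (forall x, (forall i, p i x = 0) -> x = 0)
    & (forall u : nat -> X,
        (forall e : R, 0 < e -> exists N, forall m n, (N <= m)%N -> (N <= n)%N ->
             (fdist (u m) (u n) < e%:E)%E) ->
        exists x, forall e : R, 0 < e -> exists N, forall n, (N <= n)%N ->
             (fdist (u n) x < e%:E)%E)].

Definition fclosed (A : set X) : Prop :=
  forall x, (forall e : R, 0 < e -> exists2 a, A a & (fdist x a < e%:E)%E) -> A x.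

Definition fbounded (A : set X) : Prop :=
  forall i, exists M : R, forall a, A a -> p i a <= M.

Definition fconvex (A : set X) : Prop :=
  forall a b (l : R), A a -> A b -> 0 <= l -> l <= 1 -> A (l *: a + (1 - l) *: b).

Definition cb (A : set X) : Prop :=
  [/\ A !=set0, fclosed A, fbounded A & fconvex A].

Definition e_d (A B : set X) : \bar R :=
  ereal_sup [set ereal_inf [set fdist a b | b in B] | a in A].
Definition Hd (A B : set X) : \bar R := Order.max (e_d A B) (e_d B A).

Definition e_i (i : nat) (A B : set X) : \bar R :=
  ereal_sup [set ereal_inf [set (p i (a - b))%:E | b in B] | a in A].
Definition Hi (i : nat) (A B : set X) : \bar R := Order.max (e_i i A B) (e_i i B A).

(* simple multifunctions [0,1] -> cb(X): sum_{j<k} chi_{A_j} C_j with A_j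
   Lebesgue measurable, pairwise disjoint, covering [0,1] *)
Definition simple_multi (G : R -> set X) : Prop :=
  exists (k : nat) (A : 'I_k -> set R) (C : 'I_k -> set X),
    [/\ forall j, Lmeasurable (A j),
        forall j, cb (C j),
        forall j j', j != j' -> A j `&` A j' = set0
      & forall t, [set` `[0%R, 1%R]] t -> exists2 j, A j t & G t = C j].

Definition ae01 (P : R -> Prop) : Prop :=
  exists N : set R, [/\ Lmeasurable N, @Lmu R N = 0%E &
    forall t, [set` `[0%R, 1%R]] t -> ~ N t -> P t].

Definition bochner_measurable (G : R -> set X) : Prop :=
  exists Gn : nat -> R -> set X, (forall n, simple_multi (Gn n)) /\
    ae01 (fun t => (fun n => Hd (Gn n t) (G t)) @ \oo --> 0%E).

Definition totally_measurable (G : R -> set X) : Prop :=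
  exists Gn : nat -> R -> set X, (forall n, simple_multi (Gn n)) /\
    forall i, ae01 (fun t => (fun n => Hi i (Gn n t) (G t)) @ \oo --> 0%E).

Definition measurable_by_seminorm (G : R -> set X) : Prop :=
  forall i, exists Gn : nat -> R -> set X, (forall n, simple_multi (Gn n)) /\
    ae01 (fun t => (fun n => Hi i (Gn n t) (G t)) @ \oo --> 0%E).

End Frechet.

(* A Hausdorff distance H for the metric d is small iff finitely many
   seminorm distances H_i are small (d <= sum_{i<M} p_i + tail, and p_i is
   controlled by the i-th term of d); this gives (i) <-> (ii), and (ii) -> (iii)
   is trivial.  For (iii) -> (ii), take for each i a sequence approximating G in
   H_i.  Outside a null set it is H_i-Cauchy, so the set of t at which its tail
   from m still oscillates by more than 1/(i+1) has measure tending to 0; pick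
   m_i with measure <= 2^-(i+1).  By Borel-Cantelli almost every t lies in only
   finitely many of these sets, so the diagonal sequence of m_i-th terms
   satisfies H_i <= 2/(i+1) for large i, and since the seminorms increase, it
   converges to G in every H_j. *)

From HB Require Import structures.
From mathcomp Require Import all_boot all_order all_algebra.
From mathcomp Require Import all_classical all_reals all_analysis.
From mathcomp Require Import ring lra.
Set Implicit Arguments. Unset Strict Implicit. Unset Printing Implicit Defensive.
Import Order.TTheory GRing.Theory Num.Theory.
Local Open Scope classical_set_scope.
Local Open Scope ring_scope.

Section Seminorm.
Variables (R : realType) (X : lmodType R) (q : X -> R).
Hypothesis hq : is_seminorm q.

Lemma seminormD x y : q (x + y) <= q x + q y.
Proof. by case: hq. Qed.

Lemma seminormZ (a : R) x : q (a *: x) = `|a| * q x.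
Proof. by case: hq. Qed.

Lemma seminorm0 : q 0 = 0.
Proof. by rewrite -(scale0r (0 : X)) seminormZ normr0 mul0r. Qed.

Lemma seminormN x : q (- x) = q x.
Proof. by rewrite -scaleN1r seminormZ normrN normr1 mul1r. Qed.

Lemma seminorm_ge0 x : 0 <= q x.
Proof. by have := seminormD x (- x); rewrite subrr seminorm0 seminormN; lra. Qed.

Lemma seminormB_triangle a b c : q (a - c) <= q (a - b) + q (b - c).
Proof.
have -> : a - c = (a - b) + (b - c) by rewrite addrA subrK.
exact: seminormD.
Qed.

End Seminorm.

Lemma frechet_seminorms_seminorm (R : realType) (X : lmodType R) (p : nat -> X -> R) :
  frechet_seminorms p -> forall i, is_seminorm (p i).
Proof. by case. Qed.

Lemma frechet_seminorms_mono (R : realType) (X : lmodType R) (p : nat -> X -> R) :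
  frechet_seminorms p -> forall i j, (i <= j)%N -> forall x, p i x <= p j x.
Proof.
move=> [_ pS _ _] i j /subnK <- x; elim: (j - i)%N => [|k ih]; first by rewrite add0n.
by rewrite addSn (le_trans ih).
Qed.

Section Excess.
Variables (R : realType) (X : lmodType R) (p : nat -> X -> R).

Lemma e_i_le i (A B : set X) (x : R) :
  (forall a, A a -> forall eta : R, 0 < eta -> exists2 b, B b & p i (a - b) <= x + eta) ->
  (e_i p i A B <= x%:E)%E.
Proof.
move=> h; apply/ereal_supP => _ [a Aa <-].
apply/lee_addgt0Pr => eta eta0; apply: ge_ereal_inf.
have [b Bb hb] := h a Aa eta eta0.
exists (p i (a - b))%:E; first by exists b.
by rewrite -EFinD lee_fin.
Qed.

Lemma e_i_le_witness i (A B : set X) (x : R) a : (e_i p i A B <= x%:E)%E -> A a ->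
  forall eta : R, 0 < eta -> exists2 b, B b & p i (a - b) < x + eta.
Proof.
move=> h Aa eta eta0.
have : (ereal_inf [set (p i (a - b))%:E | b in B] < (x + eta)%:E)%E.
  apply: (le_lt_trans _ (_ : x%:E < (x + eta)%:E)%E); last by rewrite lte_fin ltrDl.
  by apply: le_trans h; apply: ereal_sup_ubound; exists a.
by move=> /ereal_inf_lt [_ [b Bb <-]]; rewrite lte_fin => ?; exists b.
Qed.

Lemma Hi_sym i (A B : set X) : Hi p i A B = Hi p i B A.
Proof. by rewrite /Hi maxC. Qed.

Lemma Hi_le i (A B : set X) (x : \bar R) :
  (Hi p i A B <= x)%E <-> (e_i p i A B <= x)%E /\ (e_i p i B A <= x)%E.
Proof. by rewrite /Hi ge_max; split => [/andP[]|[-> ->]]. Qed.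

Lemma Hi_mono i j (A B : set X) (x : R) : (forall y, p i y <= p j y) ->
  (Hi p j A B <= x%:E)%E -> (Hi p i A B <= x%:E)%E.
Proof.
move=> pij; have mono (C D : set X) : (e_i p j C D <= x%:E)%E -> (e_i p i C D <= x%:E)%E.
  move=> hj; apply: e_i_le => a Ca eta eta0.
  have [b Db hb] := e_i_le_witness hj Ca eta0.
  by exists b => //; exact: le_trans (pij _) (ltW hb).
by rewrite !Hi_le => -[/mono ? /mono ?].
Qed.

Hypothesis hsn : forall i, is_seminorm (p i).

Lemma e_i_ge0 i (A B : set X) : A !=set0 -> (0 <= e_i p i A B)%E.
Proof.
move=> [a Aa]; apply: le_ereal_sup_tmp.
exists (ereal_inf [set (p i (a - b))%:E | b in B]); first by exists a.
by apply/ereal_infP => _ [b _ <-]; rewrite lee_fin seminorm_ge0.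
Qed.

Lemma Hi_ge0 i (A B : set X) : A !=set0 -> (0 <= Hi p i A B)%E.
Proof. by move=> /(e_i_ge0 i B) h; rewrite /Hi le_max h. Qed.

Lemma e_i_triangle i (A B C : set X) (x y : R) : (e_i p i A B <= x%:E)%E ->
  (e_i p i B C <= y%:E)%E -> (e_i p i A C <= (x + y)%:E)%E.
Proof.
move=> hAB hBC; apply: e_i_le => a Aa eta eta0.
have eta2 : 0 < eta / 2 by rewrite divr_gt0.
have [b Bb hb] := e_i_le_witness hAB Aa eta2.
have [c Cc hc] := e_i_le_witness hBC Bb eta2.
by exists c => //; apply: le_trans (seminormB_triangle (hsn i) a b c) _; lra.
Qed.

Lemma Hi_triangle i (A B C : set X) (x y : R) : (Hi p i A B <= x%:E)%E ->
  (Hi p i B C <= y%:E)%E -> (Hi p i A C <= (x + y)%:E)%E.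
Proof.
rewrite !Hi_le => -[hAB hBA] [hBC hCB]; split; first exact: e_i_triangle hBC.
by rewrite addrC; exact: e_i_triangle hBA.
Qed.

End Excess.

Section ErealSequences.
Variable R : realType.

Lemma cvge0_le (u : nat -> \bar R) : u @ \oo --> 0%E ->
  forall e : R, 0 < e -> exists N, forall n, (N <= n)%N -> (u n <= e%:E)%E.
Proof.
move=> /fine_cvgP [ufin /cvgrPdist_le ucvg] e e0.
suff [N _ hN] : \forall n \near \oo, (u n <= e%:E)%E by exists N => n /hN.
near=> n.
have : u n \is a fin_num by near: n.
have : `|0 - fine (u n)| <= e by near: n; exact: ucvg.
rewrite sub0r normrN; case: (u n) => // r /= hr _.
by rewrite lee_fin (le_trans (ler_norm r)).
Unshelve. all: by end_near. Qed.

Lemma le_cvge0 (u : nat -> \bar R) : (forall n, (0 <= u n)%E) ->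
  (forall e : R, 0 < e -> exists N, forall n, (N <= n)%N -> (u n <= e%:E)%E) ->
  u @ \oo --> 0%E.
Proof.
move=> u0 h; apply/fine_cvgP; split.
  have [N hN] := h 1 ltr01; exists N => // n /hN un1.
  by rewrite ge0_fin_numE ?u0 // (le_lt_trans un1) // ltry.
apply/cvgrPdist_le => e e0; have [N hN] := h e e0; exists N => // n /hN une.
rewrite sub0r normrN /=; move: une (u0 n); case: (u n) => // r /=.
by rewrite !lee_fin => re r0; rewrite ger0_norm.
Qed.

End ErealSequences.

Section SaturatedRatio.
Variable R : realFieldType.

Lemma div1D_ge0 (q : R) : 0 <= q -> 0 <= q / (1 + q).
Proof. by move=> q0; rewrite divr_ge0 // addr_ge0. Qed.

Lemma div1D_le1 (q : R) : 0 <= q -> q / (1 + q) <= 1.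
Proof. by move=> q0; rewrite ler_pdivrMr ?mul1r ?lerDr // ltr_pwDl. Qed.

Lemma div1D_le (q : R) : 0 <= q -> q / (1 + q) <= q.
Proof. by move=> q0; rewrite ler_pdivrMr ?ltr_pwDl // ler_peMr // lerDl. Qed.

Lemma div1D_lt (q e : R) : 0 <= q -> 0 < e -> q / (1 + q) < e / (1 + e) -> q < e.
Proof.
move=> q0 e0; rewrite !ltNge; apply: contra => eq.
rewrite ler_pdivrMr ?ltr_pwDl ?(ltW e0) // mulrAC ler_pdivlMr ?ltr_pwDl //; nra.
Qed.

Lemma exp2N_gt0 i : 0 < (2 : R) ^- i.+1.
Proof. by rewrite invr_gt0 exprn_gt0. Qed.

Lemma exp2N_le1 i : (2 : R) ^- i.+1 <= 1.
Proof. by rewrite invf_le1 ?exprn_gt0 // exprn_ege1 // ler1n. Qed.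

End SaturatedRatio.

Lemma exp2N_series_lty (R : realType) : (\sum_(0 <= k <oo) ((2 : R) ^- k.+1)%:E < +oo)%E.
Proof.
apply: (le_lt_trans _ (ltry 1)).
have := @epsilon_trick0 R 1 xpredT ler01.
rewrite (@eq_eseriesr _ _ (fun k => ((2 : R) ^- k.+1)%:E)) //.
by move=> k _; rewrite natrX div1r.
Qed.

Lemma exp2N_series_tail_small (R : realType) (e : R) : 0 < e ->
  exists M, (\sum_(M <= k <oo) ((2 : R) ^- k.+1)%:E <= e%:E)%E.
Proof.
move=> e0; have := nneseries_tail_cvg (exp2N_series_lty R) (fun k _ => ltW (exp2N_gt0 R k)).
by move=> /cvge0_le /(_ e e0) [M hM]; exists M; exact: hM.
Qed.

Section FrechetDistance.
Variables (R : realType) (X : lmodType R) (p : nat -> X -> R).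
Hypothesis hsn : forall i, is_seminorm (p i).

Definition fdist_term i (x y : X) : R := 2 ^- i.+1 * (p i (x - y) / (1 + p i (x - y))).

Lemma fdistE x y : fdist p x y = (\sum_(i <oo) (fdist_term i x y)%:E)%E.
Proof. by []. Qed.

Lemma fdist_term_ge0 i x y : 0 <= fdist_term i x y.
Proof. by rewrite mulr_ge0 ?(ltW (exp2N_gt0 _ i)) ?div1D_ge0 ?seminorm_ge0. Qed.

Lemma fdist_term_le_exp2N i x y : fdist_term i x y <= 2 ^- i.+1.
Proof. by rewrite /fdist_term ler_piMr ?(ltW (exp2N_gt0 _ i)) ?div1D_le1 ?seminorm_ge0. Qed.

Lemma fdist_term_le_seminorm i x y : fdist_term i x y <= p i (x - y).
Proof.
have pge0 := seminorm_ge0 (hsn i) (x - y).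
apply: le_trans (ler_piMl (div1D_ge0 pge0) (exp2N_le1 _ i)) _.
exact: div1D_le.
Qed.

Lemma fdist_ge0 x y : (0 <= fdist p x y)%E.
Proof. by apply: nneseries_ge0 => n _ _; rewrite lee_fin fdist_term_ge0. Qed.

Lemma fdist_term_le_fdist i x y : ((fdist_term i x y)%:E <= fdist p x y)%E.
Proof.
have term_ge0 n : (0 <= (fdist_term n x y)%:E)%E by rewrite lee_fin fdist_term_ge0.
apply: le_trans (nneseries_lim_ge i.+1 (fun n _ _ => term_ge0 n)).
by rewrite big_nat_recr //= leeDr // sume_ge0.
Qed.

Lemma e_d_le (A B : set X) (x : R) :
  (forall a, A a -> forall eta : R, 0 < eta ->
     exists2 b, B b & (fdist p a b <= (x + eta)%:E)%E) ->
  (e_d p A B <= x%:E)%E.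
Proof.
move=> h; apply/ereal_supP => _ [a Aa <-].
apply/lee_addgt0Pr => eta eta0; apply: ge_ereal_inf.
have [b Bb hb] := h a Aa eta eta0.
by exists (fdist p a b); first by exists b.
Qed.

Lemma e_d_le_witness (A B : set X) (x : R) a : (e_d p A B <= x%:E)%E -> A a ->
  forall eta : R, 0 < eta -> exists2 b, B b & (fdist p a b < (x + eta)%:E)%E.
Proof.
move=> h Aa eta eta0.
have : (ereal_inf [set fdist p a b | b in B] < (x + eta)%:E)%E.
  apply: (le_lt_trans _ (_ : x%:E < (x + eta)%:E)%E); last by rewrite lte_fin ltrDl.
  by apply: le_trans h; apply: ereal_sup_ubound; exists a.
by move=> /ereal_inf_lt [_ [b Bb <-]] ?; exists b.
Qed.

Lemma Hd_ge0 (A B : set X) : A !=set0 -> (0 <= Hd p A B)%E.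
Proof.
move=> [a Aa]; rewrite /Hd le_max; apply/orP; left; apply: le_ereal_sup_tmp.
exists (ereal_inf [set fdist p a b | b in B]); first by exists a.
by apply/ereal_infP => _ [b _ <-]; rewrite fdist_ge0.
Qed.

Lemma Hi_small_of_Hd_small i (eps : R) : 0 < eps -> exists2 delta : R, 0 < delta &
  forall A B : set X, (Hd p A B <= delta%:E)%E -> (Hi p i A B <= eps%:E)%E.
Proof.
move=> e0; set c := 2 ^- i.+1 * (eps / (1 + eps)).
have c0 : 0 < c by rewrite mulr_gt0 ?exp2N_gt0 // divr_gt0 // addr_gt0.
have c20 : 0 < c / 2 by rewrite divr_gt0.
exists (c / 2) => // A B.
have small (C D : set X) : (e_d p C D <= (c / 2)%:E)%E -> (e_i p i C D <= eps%:E)%E.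
  move=> hCD; apply: e_i_le => a Ca eta eta0.
  have [b Db hb] := e_d_le_witness hCD Ca c20.
  exists b => //.
  have : fdist_term i a b < c.
    by rewrite -lte_fin (le_lt_trans (fdist_term_le_fdist _ _ _)) // (splitr c).
  rewrite /fdist_term /c ltr_pM2l ?exp2N_gt0 //.
  move=> /div1D_lt -/(_ (seminorm_ge0 (hsn i) _) e0) /ltW /le_trans; apply.
  by rewrite lerDl ltW.
by rewrite /Hd ge_max Hi_le => /andP[/small ? /small ?].
Qed.

Hypothesis hmono : forall i j, (i <= j)%N -> forall x, p i x <= p j x.

Lemma Hd_small_of_Hi_small (eps : R) : 0 < eps -> exists M, exists2 delta : R, 0 < delta &
  forall A B : set X, (Hi p M A B <= delta%:E)%E -> (Hd p A B <= eps%:E)%E.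
Proof.
move=> e0; have e20 : 0 < eps / 2 by rewrite divr_gt0.
have [M tailM] := exp2N_series_tail_small e20.
set m : R := M%:R; have m0 : 0 <= m by rewrite /m ler0n.
have m1 : 0 < m + 1 by rewrite ltr_wpDl.
exists M, (eps / 2 / (m + 1)); first by rewrite divr_gt0.
have small (C D : set X) :
    (e_i p M C D <= (eps / 2 / (m + 1))%:E)%E -> (e_d p C D <= eps%:E)%E.
  move=> hCD; apply: e_d_le => a Ca eta eta0.
  have eta'0 : 0 < eta / (m + 1) by rewrite divr_gt0.
  have [b Db hb] := e_i_le_witness hCD Ca eta'0.
  exists b => //; set d := eps / 2 / (m + 1) + eta / (m + 1).
  rewrite fdistE (nneseries_split 0 M); last by move=> *; rewrite lee_fin fdist_term_ge0.
  (* the first M terms are each below p_M(a - b) < d, the tail is below eps/2 *)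
  apply: (@le_trans _ _ ((d *+ M)%:E + (eps / 2)%:E)%E); last first.
    rewrite -EFinD lee_fin -mulr_natr -/m.
    have r1 : m / (m + 1) <= 1 by rewrite ler_pdivrMr // mul1r lerDl.
    have r0 : 0 <= m / (m + 1) by rewrite divr_ge0 // ltW.
    have -> : d * m = (eps / 2 + eta) * (m / (m + 1)) by rewrite /d; field; rewrite gt_eqF.
    nra.
  apply: leeD.
    rewrite add0n sumEFin lee_fin.
    rewrite (_ : d *+ M = \sum_(0 <= k < M) d); last by rewrite sumr_const_nat subn0.
    apply: ler_sum_nat => k /andP[_ kM].
    apply: le_trans (fdist_term_le_seminorm _ _ _) _.
    exact: le_trans (hmono (ltnW kM) _) (ltW hb).
  apply: le_trans tailM; apply: lee_nneseries => [k _ _|k _].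
    by rewrite lee_fin fdist_term_ge0.
  by rewrite lee_fin fdist_term_le_exp2N.
by move=> A B; rewrite Hi_le /Hd ge_max => -[/small -> /small ->].
Qed.

End FrechetDistance.

Section LebesgueMeasure.
Variable R : realType.

Definition Lmeasurable_type := caratheodory_type (R:=R) (wlength (R:=R) idfun)^*%mu.
Definition Lmeasure : {measure set Lmeasurable_type -> \bar R} := @Lmu R.

Lemma LmuE (A : set R) : Lmu A = Lmeasure A. Proof. by []. Qed.
Lemma LmeasurableE (A : set R) : Lmeasurable A = measurable (A : set Lmeasurable_type).
Proof. by []. Qed.

Lemma Lmeasurable_bigcup (F : nat -> set R) :
  (forall i, Lmeasurable (F i)) -> Lmeasurable (\bigcup_i F i).
Proof. by move=> mF; rewrite LmeasurableE; apply: bigcupT_measurable. Qed.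

Lemma Lmeasurable_setI (A B : set R) :
  Lmeasurable A -> Lmeasurable B -> Lmeasurable (A `&` B).
Proof. exact: measurableI. Qed.

Lemma Lmeasurable_cst (P : Prop) : Lmeasurable [set _ : R | P].
Proof.
rewrite LmeasurableE; case: (pselect P) => h.
  by rewrite (_ : [set _ | P] = setT) //; apply/seteqP; split.
by rewrite (_ : [set _ | P] = set0) //; apply/seteqP; split.
Qed.

Lemma Lmeasurable_itv (i : interval R) : Lmeasurable [set` i].
Proof. exact: (@sub_caratheodory _ _ R (wlength idfun) _ (measurable_itv i)). Qed.

Lemma Lmu_itv01 : @Lmu R [set` `[0%R, 1%R]] = 1%E.
Proof.
transitivity (@lebesgue_measure R [set` `[0%R, 1%R]]); first by [].
by rewrite lebesgue_measure_itv /= lte_fin ltr01 oppr0 adde0.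
Qed.

Lemma Lmu_le (A B : set R) : Lmeasurable A -> Lmeasurable B -> A `<=` B -> (Lmu A <= Lmu B)%E.
Proof. by move=> mA mB AB; apply: le_measure => //; rewrite inE. Qed.

Lemma Lmu_bigcup_null (N : nat -> set R) :
  (forall i, Lmeasurable (N i) /\ Lmu (N i) = 0%E) ->
  Lmeasurable (\bigcup_i N i) /\ Lmu (\bigcup_i N i) = 0%E.
Proof.
move=> hN; have mN : Lmeasurable (\bigcup_i N i).
  by apply: Lmeasurable_bigcup => i; case: (hN i).
split => //; apply/eqP; rewrite eq_le measure_ge0 andbT LmuE.
apply: le_trans (@measure_sigma_subadditive _ _ _ Lmeasure _ N _ _ _) _ => //.
  by move=> i; case: (hN i).
by rewrite eseries0 // => i _ _; rewrite -LmuE; case: (hN i).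
Qed.

Lemma ae01_mono (P Q : R -> Prop) : ae01 P ->
  (forall t, [set` `[0%R, 1%R]] t -> P t -> Q t) -> ae01 Q.
Proof. by move=> [N [mN N0 h]] PQ; exists N; split => // t t01 /(h _ t01) /(PQ _ t01). Qed.

Lemma ae01_all (P : nat -> R -> Prop) : (forall i, ae01 (P i)) -> ae01 (fun t => forall i, P i t).
Proof.
move=> /choice [N hN].
have [mN N0] := @Lmu_bigcup_null N (fun i => let: And3 mNi Ni0 _ := hN i in conj mNi Ni0).
exists (\bigcup_i N i); split => // t t01 nNt i.
by have [_ _ +] := hN i; apply => // Nit; apply: nNt; exists i.
Qed.

Lemma ae01_and (P Q : R -> Prop) : ae01 P -> ae01 Q -> ae01 (fun t => P t /\ Q t).
Proof.
move=> aeP aeQ; pose PQ n t := if n is 0 then P t else Q t.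
have aePQ n : ae01 (PQ n) by case: n.
apply: (ae01_mono (ae01_all aePQ)) => t _ h.
by split; [exact: h 0%N | exact: h 1%N].
Qed.

Lemma ae01_eventually_notin (F : nat -> set R) : (forall j, Lmeasurable (F j)) ->
  (\sum_(0 <= j <oo) Lmu (F j) < +oo)%E ->
  ae01 (fun t => exists J, forall j, (J <= j)%N -> ~ F j t).
Proof.
move=> mF sumF; exists (lim_sup_set F); split.
- apply: bigcap_measurable => [|n _]; first by exists 0%N.
  by apply: bigcup_measurable => k _; exact: mF.
- by rewrite LmuE; apply: lim_sup_set_cvg0.
move=> t _ tF; apply: contrapT => notev; apply: tF => J _.
by apply: contrapT => nJ; apply: notev; exists J => j Jj Fj; apply: nJ; exists j.
Qed.

End LebesgueMeasure.

Section SimpleMultifunctions.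
Variables (R : realType) (X : lmodType R) (p : nat -> X -> R).

Lemma simple_multi_neq0 (S : R -> set X) t :
  simple_multi p S -> [set` `[0%R, 1%R]] t -> S t !=set0.
Proof. by move=> [k [A [C [_ cbC _ cov]]]] t01; have [j _ ->] := cov t t01; case: (cbC j). Qed.

Lemma simple_multi2_measurable (S1 S2 : R -> set X) (Q : set X -> set X -> Prop) :
  simple_multi p S1 -> simple_multi p S2 ->
  Lmeasurable ([set` `[0%R, 1%R]] `&` [set t | Q (S1 t) (S2 t)]).
Proof.
move=> [k1 [A1 [C1 [mA1 _ dA1 cov1]]]] [k2 [A2 [C2 [mA2 _ dA2 cov2]]]].
(* on [0, 1], the pair (S1, S2) is constant on each cell A1 a `&` A2 b *)
rewrite (_ : _ `&` _ = [set` `[0%R, 1%R]] `&` \bigcup_(a in [set: 'I_k1])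
   \bigcup_(b in [set: 'I_k2]) (A1 a `&` A2 b `&` [set _ | Q (C1 a) (C2 b)])).
  apply: Lmeasurable_setI; first exact: Lmeasurable_itv.
  apply: fin_bigcup_measurable => [|a _]; first exact: finite_finset.
  apply: fin_bigcup_measurable => [|b _]; first exact: finite_finset.
  by apply: Lmeasurable_setI; [exact: Lmeasurable_setI | exact: Lmeasurable_cst].
have cell_unique k (A : 'I_k -> set R) : (forall j j', j != j' -> A j `&` A j' = set0) ->
    forall j j' t, A j t -> A j' t -> j = j'.
  move=> dA j j' t Ajt Aj't; case: (eqVneq j j') => // /dA.
  by move/seteqP => [+ _] => /(_ t (conj Ajt Aj't)).
apply/seteqP; split => t [t01 ht].
  have [a Aa e1] := cov1 t t01; have [b Bb e2] := cov2 t t01.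
  by split => //; exists a => //; exists b => //; split; [by split | rewrite /= -e1 -e2].
case: ht => a _ [b _ [[Aa Bb] hQ]]; split => //=.
have [a' Aa' ->] := cov1 t t01; have [b' Bb' ->] := cov2 t t01.
by rewrite (cell_unique _ _ dA1 _ _ _ Aa' Aa) (cell_unique _ _ dA2 _ _ _ Bb' Bb).
Qed.

End SimpleMultifunctions.

Section Oscillation.
Variables (R : realType) (X : lmodType R) (p : nat -> X -> R).
Hypothesis hsn : forall i, is_seminorm (p i).
Variables (S : nat -> R -> set X) (i : nat) (c : R).
Hypothesis hS : forall n, simple_multi p (S n).

Definition osc_set m : set R := \bigcup_m1 \bigcup_m2
  ([set` `[0%R, 1%R]] `&` [set t : R | [/\ (m <= m1)%N, (m <= m2)%N &
                                          ~ (Hi p i (S m1 t) (S m2 t) <= c%:E)%E]]).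

Lemma osc_set_measurable m : Lmeasurable (osc_set m).
Proof.
apply: Lmeasurable_bigcup => m1; apply: Lmeasurable_bigcup => m2.
exact: (simple_multi2_measurable
  (fun A B => [/\ (m <= m1)%N, (m <= m2)%N & ~ (Hi p i A B <= c%:E)%E]) (hS m1) (hS m2)).
Qed.

Lemma osc_set_sub01 m : osc_set m `<=` [set` `[0%R, 1%R]].
Proof. by move=> t [m1 _ [m2 _ []]]. Qed.

Lemma osc_set_nonincreasing : {homo osc_set : n m / (n <= m)%N >-> (m <= n)%O}.
Proof.
move=> m m' mm'; apply/subsetPset => t [m1 _ [m2 _ [t01 [h1 h2 h3]]]].
by exists m1 => //; exists m2 => //; split => //; split => //; exact: leq_trans mm' _.
Qed.

Lemma cvg_notin_osc_set t B : 0 < c ->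
  (fun n => Hi p i (S n t) B) @ \oo --> 0%E -> exists m, ~ osc_set m t.
Proof.
move=> c0 /cvge0_le /(_ (c / 2)) [|M hM]; first by rewrite divr_gt0.
exists M => -[m1 _ [m2 _ [_ [Mm1 Mm2]]]]; apply.
by rewrite (splitr c) (Hi_triangle hsn (hM _ Mm1)) // Hi_sym hM.
Qed.

Lemma Lmu_osc_set_cvg0 (G : R -> set X) : 0 < c ->
  ae01 (fun t => (fun n => Hi p i (S n t) (G t)) @ \oo --> 0%E) ->
  (fun m => Lmu (osc_set m)) @ \oo --> 0%E.
Proof.
move=> c0 [N [mN N0 cvgN]].
have mcap : Lmeasurable (\bigcap_m osc_set m).
  by rewrite LmeasurableE; apply: bigcapT_measurable => m; exact: osc_set_measurable.
have osc0_fin : (Lmeasure R (osc_set 0) < +oo)%E.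
  rewrite -LmuE (@le_lt_trans _ _ 1%E) ?ltry // -Lmu_itv01.
  by apply: Lmu_le; [exact: osc_set_measurable | exact: Lmeasurable_itv | exact: osc_set_sub01].
have := nonincreasing_cvg_mu osc0_fin osc_set_measurable mcap osc_set_nonincreasing.
suff -> : Lmeasure R (\bigcap_m osc_set m) = 0%E by [].
apply/eqP; rewrite eq_le measure_ge0 andbT -LmuE -N0; apply: Lmu_le => // t osct.
have t01 := osc_set_sub01 (osct 0%N I).
apply: contrapT => Nt; have [m] := cvg_notin_osc_set c0 (cvgN t t01 Nt).
by apply; exact: osct.
Qed.

Lemma Hi_le_notin_osc_set t m B : [set` `[0%R, 1%R]] t -> ~ osc_set m t ->
  (fun n => Hi p i (S n t) B) @ \oo --> 0%E -> 0 < c ->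
  (Hi p i (S m t) B <= (c + c)%:E)%E.
Proof.
move=> t01 oscmt /cvge0_le cvgB c0; have [M hM] := cvgB c c0.
have tail_close m2 : (m <= m2)%N -> (Hi p i (S m t) (S m2 t) <= c%:E)%E.
  move=> mm2; apply: contrapT => far; apply: oscmt.
  by exists m => //; exists m2 => //; split => //; split.
by apply: (Hi_triangle hsn (tail_close (maxn M m) _) (hM _ _)); rewrite ?leq_maxr ?leq_maxl.
Qed.

End Oscillation.

Section Equivalences.
Variables (R : realType) (X : lmodType R) (p : nat -> X -> R).
Hypotheses (hsn : forall i, is_seminorm (p i))
           (hmono : forall i j, (i <= j)%N -> forall x, p i x <= p j x).

Lemma Hi_cvg0_of_Hd_cvg0 (A : nat -> set X) (B : set X) : (forall n, A n !=set0) ->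
  (fun n => Hd p (A n) B) @ \oo --> 0%E ->
  forall i, (fun n => Hi p i (A n) B) @ \oo --> 0%E.
Proof.
move=> A0 cvgA i; apply: le_cvge0 => [n|e e0]; first exact: Hi_ge0.
have [d d0 hd] := Hi_small_of_Hd_small hsn i e0.
by have [N hN] := cvge0_le cvgA d0; exists N => n /hN /hd.
Qed.

Lemma Hd_cvg0_of_Hi_cvg0 (A : nat -> set X) (B : set X) : (forall n, A n !=set0) ->
  (forall i, (fun n => Hi p i (A n) B) @ \oo --> 0%E) ->
  (fun n => Hd p (A n) B) @ \oo --> 0%E.
Proof.
move=> A0 cvgA; apply: le_cvge0 => [n|e e0]; first exact: Hd_ge0.
have [M [d d0 hd]] := Hd_small_of_Hi_small hsn hmono e0.
by have [N hN] := cvge0_le (cvgA M) d0; exists N => n /hN /hd.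
Qed.

Lemma Hi_cvg0_of_diagonal_bound (T : nat -> set X) (B : set X) J :
  (forall n, T n !=set0) ->
  (forall j, (J <= j)%N -> (Hi p j (T j) B <= (j.+1%:R^-1 + j.+1%:R^-1)%:E)%E) ->
  forall i, (fun n => Hi p i (T n) B) @ \oo --> 0%E.
Proof.
move=> T0 bound i; apply: le_cvge0 => [n|e e0]; first exact: Hi_ge0.
pose K := Num.Def.archi_bound (2 / e).
have hK : 2 / e < K%:R by apply: archi_boundP; rewrite divr_ge0 // ltW.
exists (maxn J (maxn i K)) => n; rewrite !geq_max => /and3P[Jn iN KN].
apply: (Hi_mono (hmono iN)); apply: le_trans (bound n Jn) _; rewrite lee_fin.
have -> : n.+1%:R^-1 + n.+1%:R^-1 = 2 / n.+1%:R :> R by rewrite mulrC mulr_natr mulr2n.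
rewrite ler_pdivrMr ?ltr0n //.
move: hK; rewrite ltr_pdivrMr // => /ltW /le_trans; apply.
by rewrite mulrC ler_pM2l // ler_nat (leq_trans KN).
Qed.

Lemma bochner_totally_measurable (G : R -> set X) :
  bochner_measurable p G <-> totally_measurable p G.
Proof.
split=> -[Gn [sG aeG]]; exists Gn; split => //.
  move=> i; apply: (ae01_mono aeG) => t t01 /Hi_cvg0_of_Hd_cvg0; apply.
  by move=> n; exact: simple_multi_neq0 (sG n) t01.
apply: (ae01_mono (ae01_all aeG)) => t t01; apply: Hd_cvg0_of_Hi_cvg0.
by move=> n; exact: simple_multi_neq0 (sG n) t01.
Qed.

Lemma totally_measurable_by_seminorm (G : R -> set X) :
  totally_measurable p G -> measurable_by_seminorm p G.
Proof. by move=> [Gn [sG aeG]] i; exists Gn. Qed.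

Lemma measurable_by_seminorm_totally (G : R -> set X) :
  measurable_by_seminorm p G -> totally_measurable p G.
Proof.
move=> /choice [S hS].
have sS j n : simple_multi p (S j n) by case: (hS j).
have aeS j : ae01 (fun t => (fun n => Hi p j (S j n t) (G t)) @ \oo --> 0%E) by case: (hS j).
pose c (j : nat) : R := j.+1%:R^-1.
have c0 j : 0 < c j by rewrite invr_gt0 ltr0n.
pose osc j := osc_set p (S j) j (c j).
have /choice [m osc_small] : forall j, exists M, (Lmu (osc j M) <= (2 ^- j.+1)%:E)%E.
  move=> j; have := Lmu_osc_set_cvg0 hsn (sS j) (c0 j) (aeS j).
  by move=> /cvge0_le /(_ _ (exp2N_gt0 R j)) [M hM]; exists M; exact: hM.
exists (fun j => S j (m j)); split => [j|i]; first exact: sS.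
have ae_notin : ae01 (fun t => exists J, forall j, (J <= j)%N -> ~ osc j (m j) t).
  apply: ae01_eventually_notin => [j|]; first exact: osc_set_measurable.
  apply: le_lt_trans (exp2N_series_lty R).
  by apply: lee_nneseries => [j _ _|j _ //]; rewrite measure_ge0.
apply: (ae01_mono (ae01_and (ae01_all aeS) ae_notin)) => t t01 [cvgS [J notin]].
apply: (@Hi_cvg0_of_diagonal_bound _ _ J) => [n|j Jj].
  exact: simple_multi_neq0 (sS n (m n)) t01.
exact: Hi_le_notin_osc_set (notin j Jj) (cvgS j) (c0 j).
Qed.

End Equivalences.

Theorem theorem3p5 (R : realType) (X : lmodType R) (p : nat -> X -> R)
  (hp : frechet_seminorms p) (G : R -> set X)
  (hG : forall t, [set` `[0%R, 1%R]] t -> cb p (G t)) :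
  (bochner_measurable p G <-> totally_measurable p G) /\
  (totally_measurable p G <-> measurable_by_seminorm p G).
Proof.
have hsn := frechet_seminorms_seminorm hp; have hmono := frechet_seminorms_mono hp.
split; first exact: bochner_totally_measurable.
split; [exact: totally_measurable_by_seminorm | exact: measurable_by_seminorm_totally].
Qed.
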